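(* Let $\xi$ be an integrable random variable, $M\in\mathcal M$, $I\in\mathcal N$ and $t\ge0$ (resp. $t>0$ for the second identity). Then, under the convention $0/0:=0$, almost surely $$\mathbb I^M_t\,\mathbb E[\xi\mid\mathcal G_t\vee\sigma(R_I)]=\mathbb I^M_t\,\frac{\mathbb E_{M,R_I}[\xi\,\mathbb I^M_t]}{\mathbb E_{M,R_I}[\mathbb I^M_t]},\qquad \mathbb I^M_{t-}\,\mathbb E[\xi\mid\mathcal G^-_t\vee\sigma(R_I)]=\mathbb I^M_{t-}\,\frac{\mathbb E_{M,R_I}[\xi\,\mathbb I^M_{t-}]}{\mathbb E_{M,R_I}[\mathbb I^M_{t-}]}.$$ (For $I=\emptyset$, $\sigma(R_I)$ is the trivial $\sigma$-algebra.)
   Context: Standing framework. Let $(\Omega,\mathcal A,P)$ be a complete probability space where $\Omega$ is a Polish space and $\mathcal A$ its Borel $\sigma$-algebra; let $\mathcal Z\subset\mathcal A$ denote the family of $P$-null sets. Let $E$ be a separable complete metric space with Borel $\sigma$-algebra $\mathcal E$. Let $T_i:\Omega\to[0,\infty]$ and $Z_i:\Omega\to E$, $i\in\mathbb N$, be random variables such that for every $i\in\mathbb N$: $Z_{2i-1}=Z_{2i}$, $T_{2i-1}\le T_{2i}$, and $T_{2i-1}<T_{2i}$ on $\{T_{2i}<\infty\}$. Assume $\mathbb E[\sum_{i=1}^\infty\mathbf 1_{\{T_i\le t\}}]<\infty$ for all $t\ge0$. Let $\mathcal N$ be the set of finite subsets of $\mathbb N$ and $\mathcal M$ the set of finite subsets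 of $\{1,3,5,\dots\}$. For $I\in\mathcal N$ let $E_I=E^{|I|}$, $\mathcal E_I=\mathcal B(E_I)$, $Z_I=(Z_i)_{i\in I}$, and define the random counting measure $\mu_I$ on $[0,\infty)\times E_I$ by $\mu_I([0,t]\times B)=\mathbf 1_{\{t\ge T_i=T_j\ \forall i,j\in I\}\cap\{T_i\neq T_j\ \forall i\in I,\,j\notin I\}}\mathbf 1_{\{Z_I\in B\}}$, $t\ge0$, $B\in\mathcal E_I$. Let $Q_I=\sup\{t\ge0:\mu_I([0,t]\times E_I)=0\}$ and $R_I=(Q_I,Z_I)$. Information: $\mathcal G_t=\sigma\big(\{T_{2i-1}\le t<T_{2i}\}\cap\{Z_{2i}\in B\}:B\in\mathcal E,i\in\mathbb N\big)\vee\mathcal Z$ ($t\ge0$), $\mathcal G^-_t=\sigma\big(\{T_{2i-1}< t\le T_{2i}\}\cap\{Z_{2i}\in B\}:B\in\mathcal E,i\in\mathbb N\big)\vee\mathcal Z$ ($t>0$). For $M\in\mathcal M$: $A^M_t=\bigcap_{i\in M}\{T_i\le t<T_{i+1}\}\cap\bigcap_{i\text{ odd},\,i\notin M}(\Omega\setminus\{T_i\le t<T_{i+1}\})$, $A^M_{t-}$ defined in the same way with $\{T_i<t\le T_{i+1}\}$ in place of $\{T_i\le t<T_{i+1}\}$, $\mathbb I^M_t=\mathbf 1_{A^M_t}$, $\mathbb I^M_{t-}=\mathbf 1_{A^M_{t-}}$. Conditional distributions: for $M\in\mathcal M$, $I\in\mathcal N$, $P_{M,R_I}$ is a fixed regular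 version of $P(\cdot\mid Z_M,R_I)$ and $\mathbb E_{M,R_I}[\xi]=\int\xi\,dP_{M,R_I}$; $P_M:=P_{M,R_\emptyset}$ (a version of $P(\cdot\mid Z_M)$) and $\mathbb E_M$ its expectation. *)

From HB Require Import structures.
From mathcomp Require Import all_boot all_order all_algebra finmap.
From mathcomp Require Import all_classical all_reals all_analysis measurable_realfun.
Import Order.TTheory GRing.Theory Num.Theory.

Set Implicit Arguments.
Unset Strict Implicit.
Unset Printing Implicit Defensive.

Local Open Scope classical_set_scope.
Local Open Scope ring_scope.

(* Indices: the paper's index set N = {1,2,...} is represented by the
   positive naturals; index 0 of the families T, Z is never used.
   The pair (2i-1, 2i), i >= 1, is written ((2*k).+1, (2*k).+2), k = i-1. *)

Definition gen_sigma (T : Type) (G : set (set T)) : set (set T) :=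
  smallest (sigma_algebra setT) G.

Definition null_sets d (Omega : measurableType d) (R : realType)
  (P : probability Omega R) : set (set Omega) :=
  [set A | measurable A /\ P A = 0%E].

Definition preimages d' (Omega : Type) (U : measurableType d')
  (X : Omega -> U) : set (set Omega) :=
  [set A | exists2 B, measurable B & A = X @^-1` B].

Section Model.
Context (d dE : measure_display) (Omega : measurableType d) (R : realType)
  (E : measurableType dE) (T : nat -> Omega -> \bar R) (Z : nat -> Omega -> E).

(* generators of G_t (without the null sets) *)
Definition G_gens (t : R) : set (set Omega) :=
  [set A | exists k (B : set E), measurable B /\
     A = [set w | (T (2*k).+1 w <= t%:E < T (2*k).+2 w)%E /\ B (Z (2*k).+2 w)]].

(* generators of G^-_t (without the null sets) *)
Definition Gm_gens (t : R) : set (set Omega) :=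
  [set A | exists k (B : set E), measurable B /\
     A = [set w | (T (2*k).+1 w < t%:E <= T (2*k).+2 w)%E /\ B (Z (2*k).+2 w)]].

(* mu_I([0,t] x E_I)(w) = 1 *)
Definition mu_mass_event (I : {fset nat}) (t : R) : set Omega :=
  [set w | (forall i, i \in I -> (T i w <= t%:E)%E) /\
           (forall i j, i \in I -> j \in I -> T i w = T j w) /\
           (forall i j, i \in I -> (0 < j)%N -> j \notin I -> T i w <> T j w)].

(* Q_I = sup{t >= 0 : mu_I([0,t] x E_I) = 0}, supremum taken in [0,+oo]
   (so that sup of the empty set is 0) *)
Definition Q_ (I : {fset nat}) (w : Omega) : \bar R :=
  ereal_sup ([set 0%E] `|`
             [set t%:E | t in [set t : R | 0 <= t /\ ~ mu_mass_event I t w]]).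

(* generators of sigma(R_I) = sigma(Q_I, Z_I) *)
Definition RI_gens (I : {fset nat}) : set (set Omega) :=
  preimages (Q_ I) `|`
  [set A | exists i, i \in I /\ preimages (Z i) A].

Definition ZM_gens (M : {fset nat}) : set (set Omega) :=
  [set A | exists i, i \in M /\ preimages (Z i) A].

Definition A_ (M : {fset nat}) (t : R) : set Omega :=
  [set w | (forall i, i \in M -> (T i w <= t%:E < T i.+1 w)%E) /\
           (forall i, odd i -> i \notin M -> ~ (T i w <= t%:E < T i.+1 w)%E)].

Definition Am_ (M : {fset nat}) (t : R) : set Omega :=
  [set w | (forall i, i \in M -> (T i w < t%:E <= T i.+1 w)%E) /\
           (forall i, odd i -> i \notin M -> ~ (T i w < t%:E <= T i.+1 w)%E)].

End Model.

Definition GRI d dE (Omega : measurableType d) (R : realType)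
  (E : measurableType dE) (P : probability Omega R)
  (T : nat -> Omega -> \bar R) (Z : nat -> Omega -> E) (I : {fset nat}) (t : R) :=
  gen_sigma (G_gens T Z t `|` null_sets P `|` RI_gens T Z I).

Definition GmRI d dE (Omega : measurableType d) (R : realType)
  (E : measurableType dE) (P : probability Omega R)
  (T : nat -> Omega -> \bar R) (Z : nat -> Omega -> E) (I : {fset nat}) (t : R) :=
  gen_sigma (Gm_gens T Z t `|` null_sets P `|` RI_gens T Z I).

Definition ZMRI d dE (Omega : measurableType d) (R : realType)
  (E : measurableType dE)
  (T : nat -> Omega -> \bar R) (Z : nat -> Omega -> E) (M I : {fset nat}) :=
  gen_sigma (ZM_gens Z M `|` RI_gens T Z I).

Definition regular_cond_prob d (Omega : measurableType d) (R : realType)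
  (P : probability Omega R) (H : set (set Omega))
  (kappa : Omega -> probability Omega R) : Prop :=
  (forall A, measurable A -> forall B : set (\bar R), measurable B ->
      H ((fun w => kappa w A) @^-1` B)) /\
  (forall A, measurable A -> forall B, H B ->
      (\int[P]_(w in B) kappa w A = P (A `&` B))%E).

Definition cond_exp_version d (Omega : measurableType d) (R : realType)
  (P : probability Omega R) (G : set (set Omega)) (xi Y : Omega -> R) : Prop :=
  (forall B : set R, measurable B -> G (Y @^-1` B)) /\
  P.-integrable setT (EFin \o Y) /\
  (forall A, G A -> (\int[P]_(w in A) (Y w)%:E = \int[P]_(w in A) (xi w)%:E)%E).

(* a / b with the convention 0/0 := 0 (b is a finite number in [0,1] here) *)
Definition ediv0 (R : realType) (a b : \bar R) : \bar R :=
  if b == 0%E then 0%E else (a * ((fine b)^-1)%:E)%E.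

From HB Require Import structures.
From mathcomp Require Import all_boot all_order all_algebra finmap.
From mathcomp Require Import all_classical all_reals all_analysis measurable_realfun.
Import Order.TTheory GRing.Theory Num.Theory.
Local Open Scope classical_set_scope.
Local Open Scope ring_scope.
Set Implicit Arguments. Unset Strict Implicit.

(* On A = A^M_t the information G_t v sigma(R_I) agrees, up to null sets, with
   sigma(Z_M, R_I): an active pair (2k+1, 2k+2) reveals Z_(2k+1), an inactive
   one is known to be inactive and reveals nothing.  Hence for rational q the
   part of A where Y > q while the kernel ratio E_kappa[xi 1_A] / kappa(A) is
   < q belongs to G_t v sigma(R_I); disintegrating with kappa, the integral of
   Y - q over it is <= 0, so it is null.  Doing the same for -xi and taking
   the countable union over q gives the identity a.s.  The case t- is
   identical, with the events T_i < t <= T_(i+1). *)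

Section measurable_Q.
Local Open Scope ereal_scope.
Context d (Omega : measurableType d) (R : realType) (T : nat -> Omega -> \bar R).
Hypothesis mT : forall i, measurable_fun setT (T i).

Definition ties_within (I : {fset nat}) w :=
  forall i j, i \in I -> j \in I -> T i w = T j w.

Definition no_tie_outside (I : {fset nat}) w :=
  forall i j, i \in I -> (0 < j)%N -> j \notin I -> T i w <> T j w.

Lemma Q_gtP (I : {fset nat}) (x : R) w : x%:E < Q_ T I w <->
  [\/ (x < 0)%R, ~ ties_within I w, ~ no_tie_outside I w |
      exists2 i, i \in I & x%:E < T i w].
Proof.
split.
  move/ereal_sup_gt => [e [->|[t [t0 nev] <-]] xe].
    by apply: Or41; rewrite -lte_fin.
  apply: contrapT => hn; apply: nev; split; [|split].
  - move=> i iI; rewrite leNgt; apply/negP => lt; apply: hn; apply: Or44.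
    by exists i => //; exact: lt_trans xe lt.
  - by apply: contrapT => h; apply: hn; apply: Or42.
  - by apply: contrapT => h; apply: hn; apply: Or43.
have [x0|x0] := ltP x 0%R.
  move=> _; apply: (lt_le_trans _ (ereal_sup_ubound _)); last by left.
  by rewrite lte_fin.
have witness (t : R) : (x < t)%R -> ~ mu_mass_event T I t w -> x%:E < Q_ T I w.
  move=> xt nev; apply: (lt_le_trans _ (ereal_sup_ubound _)); last first.
    by right; exists t => //; split => //; rewrite (le_trans x0)// ltW.
  by rewrite lte_fin.
have x1 : (x < x + 1)%R by rewrite ltrDl.
case=> [//|h|h|[i iI]].
- by apply: (witness _ x1) => -[_ []].
- by apply: (witness _ x1) => -[_ []].
case Ey: (T i w) => [y| |] // xT.
- apply: (witness ((x + y) / 2)%R); first by rewrite (midf_lt _).1 // -lte_fin.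
  move=> [h _]; have := h i iI; rewrite Ey lee_fin leNgt.
  by rewrite (midf_lt _).2 // -lte_fin.
- by apply: (witness _ x1) => -[h _]; have := h i iI; rewrite Ey leNgt ltry.
Qed.

Lemma measurable_eqT i j : measurable [set w | T i w = T j w].
Proof.
have := measurable_lee measurableT (mT i) (mT j).
have := measurable_lee measurableT (mT j) (mT i).
rewrite !setTI => m1 m2.
rewrite (_ : [set w | _] = [set w | T i w <= T j w] `&` [set w | T j w <= T i w]).
  exact: measurableI.
apply/seteqP; split => w /=; first by move=> ->.
by move=> [h1 h2]; apply/eqP; rewrite eq_le h1 h2.
Qed.

Lemma measurable_ties_within I : measurable [set w | ties_within I w].
Proof.
rewrite (_ : [set w | _] = \bigcap_(i in [set i | i \in I])
   \bigcap_(j in [set j | j \in I]) [set w | T i w = T j w]).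
  apply: bigcap_measurableType => i _; apply: bigcap_measurableType => j _.
  exact: measurable_eqT.
by apply/seteqP; split => w /= h i; [move=> iI j jI|move=> j iI jI]; exact: h.
Qed.

Lemma measurable_no_tie_outside I : measurable [set w | no_tie_outside I w].
Proof.
rewrite (_ : [set w | _] = \bigcap_(i in [set i | i \in I])
   \bigcap_(j in [set j | (0 < j)%N /\ j \notin I]) ~` [set w | T i w = T j w]).
  apply: bigcap_measurableType => i _; apply: bigcap_measurableType => j _.
  exact/measurableC/measurable_eqT.
apply/seteqP; split => w /=.
  by move=> h i iI j [j0 jI]; exact: h.
by move=> h i j iI j0 jI; exact: (h i iI j (conj j0 jI)).
Qed.

Lemma measurable_Q I : measurable_fun setT (Q_ T I).
Proof.
apply: (measurability _ (ErealGenOInfty.measurableE R)) => // _ [_ [x ->] <-].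
rewrite (_ : _ `&` _ = [set w | (x < 0)%R] `|` ~` [set w | ties_within I w] `|`
   ~` [set w | no_tie_outside I w] `|`
   \bigcup_(i in [set i | i \in I]) [set w | x%:E < T i w]).
  apply: measurableU; last first.
    apply: bigcup_measurable => i _.
    by have := emeasurable_fun_o_infty measurableT (mT i) x%:E; rewrite setTI.
  apply: measurableU; last exact/measurableC/measurable_no_tie_outside.
  apply: measurableU; last exact/measurableC/measurable_ties_within.
  have [x0|x0] := boolP (x < 0)%R.
    by rewrite (_ : [set w | _] = setT) //; apply/seteqP; split.
  by rewrite (_ : [set w | _] = set0) //; apply/seteqP; split => // w /= /negP.
apply/seteqP; split => w; rewrite /= in_itv /= andbT.
  move=> [_ /Q_gtP[h|h|h|[i iI h]]]; by [left; left; left|left; left; right|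
    left; right|right; exists i].
move=> h; split => //; apply/Q_gtP.
by case: h => [[[h|h]|h]|[i iI h]]; [apply: Or41|apply: Or42|apply: Or43|
  apply: Or44; exists i].
Qed.

End measurable_Q.

Section null_sets_and_integrals.
Local Open Scope ereal_scope.
Context d (Omega : measurableType d) (R : realType).

Lemma negligible_bigcup_countable (I : countType) (mu : {measure set Omega -> \bar R})
    (F : I -> set Omega) :
  (forall i, mu.-negligible (F i)) -> mu.-negligible (\bigcup_i F i).
Proof.
move=> F0; pose G n := if choice.unpickle n is Some i then F i else set0.
apply: (negligibleS _ (negligible_bigcup (F := G) _)).
  by move=> w [i _ Fw]; exists (choice.pickle i) => //; rewrite /G choice.pickleK.
move=> n; rewrite /G.
by case: choice.unpickle => [i|]; [exact: F0|exact: negligible_set0].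
Qed.

Lemma integral_negligible_symdiff (mu : {measure set Omega -> \bar R})
    (S1 S2 : set Omega) (f : Omega -> \bar R) :
  measurable S1 -> measurable S2 -> mu.-integrable setT f ->
  mu.-negligible ((S1 `\` S2) `|` (S2 `\` S1)) ->
  \int[mu]_(x in S1) f x = \int[mu]_(x in S2) f x.
Proof.
move=> mS1 mS2 fi [N [mN N0 sub]].
rewrite (negligible_integral mN mS1 _ N0); last exact: integrableS fi.
rewrite (negligible_integral mN mS2 _ N0); last exact: integrableS fi.
congr integral; apply/seteqP; split => x [Sx Nx]; split => //.
- by apply: contrapT => S2x; apply: Nx; apply: sub; left.
- by apply: contrapT => S1x; apply: Nx; apply: sub; right.
Qed.

Lemma measure_negligible_symdiff (mu : {finite_measure set Omega -> \bar R})
    (S1 S2 : set Omega) :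
  measurable S1 -> measurable S2 ->
  mu.-negligible ((S1 `\` S2) `|` (S2 `\` S1)) -> mu S1 = mu S2.
Proof.
move=> mS1 mS2 ng.
have := @integral_negligible_symdiff mu S1 S2 (cst 1) mS1 mS2 _ ng.
rewrite !integral_cst// !mul1e; apply.
exact: finite_measure_integrable_cst.
Qed.

Lemma gt0_integral_eq0_negligible (mu : {measure set Omega -> \bar R})
    (S : set Omega) (f : Omega -> \bar R) : measurable S ->
  measurable_fun S f -> (forall x, S x -> 0 < f x) ->
  \int[mu]_(x in S) f x = 0 -> mu.-negligible S.
Proof.
move=> mS mf f0 i0.
have : \int[mu]_(x in S) `|f x| = 0.
  rewrite -{}i0; apply: eq_integral => x /[!inE] Sx.
  by rewrite gee0_abs// ltW// f0.
move/(ae_eq_integral_abs mu mS mf) => [N [mN N0 sub]].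
exists N; split => // x Sx; apply: sub => /= /(_ Sx) fx0.
by move: (f0 x Sx); rewrite fx0 ltxx.
Qed.

Lemma integrable_of_ge0_integral_eq (mu : {measure set Omega -> \bar R})
    (D : set Omega) (F h : Omega -> \bar R) : measurable D ->
  (forall w, 0 <= F w) -> measurable_fun D F ->
  mu.-integrable D h -> (forall w, 0 <= h w) ->
  \int[mu]_(w in D) F w = \int[mu]_(w in D) h w -> mu.-integrable D F.
Proof.
move=> mD F0 mF hi h0 eF; apply/integrableP; split => //.
have /integrableP[_ hfin] := hi.
rewrite (eq_integral F); last by move=> w _; rewrite gee0_abs.
rewrite eF; apply: le_lt_trans hfin; apply: ge0_le_integral => //.
- exact: measurable_int hi.
- exact/measurableT_comp/(measurable_int _ hi).
- by move=> w _; rewrite gee0_abs.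
Qed.

Lemma integrable_mul_indic (mu : {measure set Omega -> \bar R})
    (xi : Omega -> R) (A : set Omega) : measurable A ->
  mu.-integrable setT (EFin \o xi) ->
  mu.-integrable setT (fun x => (xi x * \1_A x)%:E).
Proof.
move=> mA xint; have mxi := measurable_int _ xint.
apply: le_integrable xint => //.
  apply/measurable_EFinP/measurable_funM; last exact: measurable_indic.
  exact/measurable_EFinP.
move=> x _; rewrite /= lee_fin normrM indicE.
by case: (_ \in _); rewrite ?normr1 ?mulr1 ?normr0 ?mulr0.
Qed.

Lemma cond_exp_versionN (P : probability Omega R) (G : set (set Omega))
    (xi Y : Omega -> R) : (forall D, G D -> measurable D) ->
  P.-integrable setT (EFin \o xi) -> cond_exp_version P G xi Y ->
  cond_exp_version P G (fun w => - xi w)%R (fun w => - Y w)%R.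
Proof.
move=> GM xint [YG [Yint Ye]]; split; [|split].
- move=> B mB; rewrite (_ : _ @^-1` _ = Y @^-1` (-%R @^-1` B)); last by [].
  by apply: YG; have := oppr_measurable measurableT mB; rewrite setTI.
- exact: integrableN Yint.
move=> D GD; have mD := GM _ GD.
under eq_integral do rewrite EFinN -mulN1e.
rewrite integralZl//; last exact: integrableS Yint.
rewrite Ye// -integralZl//; last exact: integrableS xint.
by under eq_integral do rewrite mulN1e -EFinN.
Qed.

End null_sets_and_integrals.

Lemma eq_no_rat_between (R : realType) (x y : R) :
  (forall r : rat, ~ (x < ratr r < y)) -> (forall r : rat, ~ (y < ratr r < x)) ->
  x = y.
Proof.
move=> nxy nyx; apply/eqP; rewrite eq_le !leNgt; apply/andP.
by split; apply/negP => /rat_in_itvoo[r]; rewrite in_itv /=; [move/nyx|move/nxy].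
Qed.

Section regular_conditional_kernel.
Local Open Scope ereal_scope.
Context d (Omega : measurableType d) (R : realType) (P : probability Omega R).
Variables (H : set (set Omega)) (kappa : Omega -> probability Omega R).
Hypothesis H_measurable : forall C, H C -> measurable C.
Hypothesis kappa_regular : regular_cond_prob P (<<s H>>) kappa.

Let X := g_sigma_algebraType H.

Lemma g_sigma_measurable C : <<s H>> C -> measurable C.
Proof.
move=> HC; apply: (smallest_sub _ _ HC) => //; exact: sigma_algebra_measurable.
Qed.

Lemma measurable_fun_g_sigma (f : Omega -> \bar R) :
  measurable_fun (setT : set X) (f : X -> \bar R) -> measurable_fun setT f.
Proof.
move=> mf _ B mB; rewrite setTI; apply: g_sigma_measurable.
by have := mf measurableT B mB; rewrite setTI.
Qed.

Lemma measurable_kernel U : measurable U ->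
  measurable_fun (setT : set X) (fun w => kappa w U).
Proof. by move=> mU _ B mB; rewrite setTI; exact: kappa_regular.1. Qed.

Lemma measurable_kernel_integral (g : Omega -> \bar R) :
  (forall x, 0 <= g x) -> measurable_fun setT g ->
  measurable_fun (setT : set X) (fun w : X => \int[kappa w]_x g x).
Proof.
move=> g0 mg; apply: (@measurable_fun_integral_kernel _ _ X Omega R
  (fun w : X => kappa w : {measure set Omega -> \bar R})) => // U mU.
exact: measurable_kernel.
Qed.

Import HBNNSimple.

Lemma integral_kernel_nnsfun (f : {nnsfun Omega >-> R}) C : <<s H>> C ->
  \int[P]_(w in C) \int[kappa w]_x (f x)%:E = \int[P]_(x in C) (f x)%:E.
Proof.
move=> HC; have mC := g_sigma_measurable HC.
have mK U : measurable U -> measurable_fun C (fun w => kappa w U).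
  move=> mU; apply: (measurable_funS measurableT) => //.
  by apply: measurable_fun_g_sigma; exact: measurable_kernel.
under eq_integral => w _ do rewrite integralT_nnsfun sintegralE.
rewrite ge0_integral_fsum//; last 2 first.
  - by move=> r; exact/measurable_funeM/mK.
  - move=> n w _; have := mulemu_ge0 (fun n => f @^-1` [set n]).
    by apply; exact: preimage_nnfun0.
under [in RHS]eq_integral do rewrite fimfunE -fsumEFin//.
rewrite ge0_integral_fsum//; last 2 first.
  - by move=> r; exact/measurable_EFinP/measurableT_comp.
  - by move=> r z _; rewrite EFinM nnfun_muleindic_ge0.
apply: eq_fsbigr => r _.
rewrite (integralZl_indic _ (fun r => f @^-1` [set r]))//; last first.
  exact: preimage_nnfun0.
rewrite integral_indic//.
have [r0|r0] := leP 0%R r.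
  by rewrite ge0_integralZl// ?kappa_regular.2//; exact: mK.
rewrite integral0_eq ?mul0e; last first.
  by move=> w _; rewrite preimage_nnfun0// measure0 mule0.
by rewrite preimage_nnfun0// set0I measure0 mule0.
Qed.

Lemma integral_kernel (g : Omega -> \bar R) C :
  (forall x, 0 <= g x) -> measurable_fun setT g -> <<s H>> C ->
  \int[P]_(w in C) \int[kappa w]_x g x = \int[P]_(x in C) g x.
Proof.
move=> g0 mg HC; have mC := g_sigma_measurable HC.
pose g_ := nnsfun_approx measurableT mg.
have gE x : g x = limn (fun n => (g_ n x)%:E).
  by apply/esym/cvg_lim => //; exact: cvg_nnsfun_approx.
have mg_ n : measurable_fun setT (fun x => (g_ n x)%:E) by exact/measurable_EFinP.
have g_0 n x : 0 <= (g_ n x)%:E by rewrite lee_fin.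
have nd_g x : nondecreasing_seq (fun n => (g_ n x)%:E).
  by move=> a b ab; rewrite lee_fin; exact/lefP/nd_nnsfun_approx.
transitivity (\int[P]_(w in C) limn (fun n => \int[kappa w]_x (g_ n x)%:E)).
  apply: eq_integral => w _; rewrite -monotone_convergence//.
  by apply: eq_integral => x _; rewrite gE.
rewrite monotone_convergence//; last 3 first.
  - move=> n; apply: measurable_funS (measurable_fun_g_sigma
      (measurable_kernel_integral _ _)) => //.
  - by move=> n w _; exact: integral_ge0.
  - by move=> w _ a b ab; apply: ge0_le_integral => // x _; exact: nd_g.
under eq_fun do rewrite integral_kernel_nnsfun//.
rewrite -monotone_convergence//.
  by apply: eq_integral => x _; rewrite gE.
all: try by move=> n; exact: measurable_funS (mg_ n).
all: by move=> x _; exact: nd_g.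
Qed.

Lemma integrable_kernel_integral (g : Omega -> \bar R) C :
  (forall x, 0 <= g x) -> P.-integrable setT g -> <<s H>> C ->
  P.-integrable C (fun w => \int[kappa w]_x g x).
Proof.
move=> g0 gi HC; have mC := g_sigma_measurable HC; have mg := measurable_int _ gi.
apply: (integrable_of_ge0_integral_eq mC _ _ (integrableS _ mC _ gi)) => //.
- by move=> w; exact: integral_ge0.
- apply: (measurable_funS measurableT) => //.
  by apply: measurable_fun_g_sigma; exact: measurable_kernel_integral.
- exact: integral_kernel.
Qed.

End regular_conditional_kernel.

Lemma eq_ratio_no_rat_between (R : realType) (y p n k : R) : 0 < k ->
  (forall r : rat, ~ (ratr r < y /\ p - n < ratr r * k)) ->
  (forall r : rat, ~ (y < ratr r /\ n - p < - ratr r * k)) ->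
  y = (p - n) / k.
Proof.
move=> k0 below above; apply: eq_no_rat_between => r /andP[r1 r2].
- by apply: (above r); split => //; rewrite mulNr ltrNr opprB -ltr_pdivlMr.
- by apply: (below r); split => //; rewrite -ltr_pdivrMr.
Qed.

Section cond_exp_on_trace.
Local Open Scope ereal_scope.
Context d (Omega : measurableType d) (R : realType) (P : probability Omega R).
Variables (H : set (set Omega)) (kappa : Omega -> probability Omega R).
Hypothesis H_measurable : forall C, H C -> measurable C.
Hypothesis kappa_regular : regular_cond_prob P (<<s H>>) kappa.

Variables (G : set (set Omega)) (A : set Omega).
Hypothesis G_measurable : forall D, G D -> measurable D.
Hypothesis GI : forall D1 D2, G D1 -> G D2 -> G (D1 `&` D2).
Hypothesis GA : G A.
Hypothesis G_traceH : forall C, <<s H>> C -> G (C `&` A).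
Hypothesis H_traceG : forall D, G D -> exists2 C, <<s H>> C &
  P.-negligible ((D `&` A `\` C) `|` (C `&` A `\` D)).

Let X := g_sigma_algebraType H.
Let mA : measurable A := G_measurable GA.

(* [kernel_pos xi w - kernel_neg xi w] is E_{M,R_I}[xi 1_A] at w, split into
   parts so that each is defined for every w. *)
Definition kernel_pos (xi : Omega -> R) w :=
  \int[kappa w]_x (fun x => (xi x * \1_A x)%:E)^\+ x.

Definition kernel_neg (xi : Omega -> R) w :=
  \int[kappa w]_x (fun x => (xi x * \1_A x)%:E)^\- x.

Lemma mul_indicN (xi : Omega -> R) :
  (fun x => ((- xi x) * \1_A x)%R%:E) = \- (fun x => (xi x * \1_A x)%:E).
Proof. by apply/funext => x; rewrite mulNr EFinN. Qed.

Lemma kernel_posN xi : kernel_pos (fun x => - xi x)%R = kernel_neg xi.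
Proof. by rewrite /kernel_pos mul_indicN funeposN. Qed.

Lemma kernel_negN xi : kernel_neg (fun x => - xi x)%R = kernel_pos xi.
Proof. by rewrite /kernel_neg mul_indicN funenegN. Qed.

Section integrable_xi.
Variable xi : Omega -> R.
Hypothesis xint : P.-integrable setT (EFin \o xi).

Let g := fun x => (xi x * \1_A x)%:E.
Let gint : P.-integrable setT g := integrable_mul_indic mA xint.
Let mg : measurable_fun setT g := measurable_int _ gint.

Lemma measurable_kernel_pos : measurable_fun (setT : set X) (kernel_pos xi).
Proof.
by apply: (measurable_kernel_integral kappa_regular) => //; exact: measurable_funepos.
Qed.

Lemma measurable_kernel_neg : measurable_fun (setT : set X) (kernel_neg xi).
Proof.
by apply: (measurable_kernel_integral kappa_regular) => //; exact: measurable_funeneg.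
Qed.

Lemma integrable_kernel_pos C : <<s H>> C -> P.-integrable C (kernel_pos xi).
Proof.
apply: (integrable_kernel_integral H_measurable kappa_regular) => //.
exact: integrable_funepos.
Qed.

Lemma integrable_kernel_neg C : <<s H>> C -> P.-integrable C (kernel_neg xi).
Proof.
apply: (integrable_kernel_integral H_measurable kappa_regular) => //.
exact: integrable_funeneg.
Qed.

Lemma integral_kernel_trace C : <<s H>> C ->
  \int[P]_(w in C) (kernel_pos xi w - kernel_neg xi w) =
  \int[P]_(w in C `&` A) (xi w)%:E.
Proof.
move=> HC; have mC := g_sigma_measurable H_measurable HC.
rewrite integralB//; [|exact: integrable_kernel_pos|exact: integrable_kernel_neg].
rewrite !(integral_kernel H_measurable kappa_regular)//;
  [|exact: measurable_funeneg|exact: measurable_funepos].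
rewrite -integralE integral_mkcondr; apply: eq_integral => w _.
by rewrite /g patchE indicE; case: (_ \in _); rewrite ?mulr1 ?mulr0.
Qed.

Definition kernel_ratio_lt q := [set w | kernel_pos xi w < +oo /\
  kernel_neg xi w < +oo /\ 0 < kappa w A /\
  kernel_pos xi w - kernel_neg xi w < q%:E * kappa w A].

Lemma g_sigma_kernel_ratio_lt q : <<s H>> (kernel_ratio_lt q).
Proof.
have mlt (f1 f2 : X -> \bar R) : measurable_fun setT f1 -> measurable_fun setT f2 ->
    <<s H>> [set w | f1 w < f2 w].
  by move=> m1 m2; have := measurable_lte measurableT m1 m2; rewrite setTI.
have mK := measurable_kernel kappa_regular mA.
have mpos := measurable_kernel_pos; have mneg := measurable_kernel_neg.
rewrite (_ : kernel_ratio_lt q = [set w | kernel_pos xi w < +oo] `&`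
  [set w | kernel_neg xi w < +oo] `&` [set w | 0 < kappa w A] `&`
  [set w | kernel_pos xi w - kernel_neg xi w < q%:E * kappa w A]); last first.
  by apply/seteqP; split => w /=; [move=> [? [? []]]|move=> [[[]]]].
apply: (@measurableI _ X); [apply: (@measurableI _ X); [apply: (@measurableI _ X)|]|];
  try exact: mlt.
by apply: mlt; [exact: emeasurable_funB|exact: measurable_funeM].
Qed.

Lemma integral_kernel_ratio_lt q C : <<s H>> C -> C `<=` kernel_ratio_lt q ->
  \int[P]_(w in C `&` A) (xi w)%:E <= q%:E * P (C `&` A).
Proof.
move=> HC CK; have mC := g_sigma_measurable H_measurable HC.
have kappaE : (fun w => kappa w A) = (fun w => \int[kappa w]_x (\1_A x)%:E).
  by apply/funext => w; rewrite integral_indic// setIT.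
have iK : P.-integrable C (fun w => kappa w A).
  rewrite kappaE; apply: (integrable_kernel_integral H_measurable kappa_regular) => //.
  exact: integrable_indic.
rewrite -integral_kernel_trace//.
apply: (@le_trans _ _ (\int[P]_(w in C) (q%:E * kappa w A))).
  apply: le_integral => //.
  - apply: integrableB => //.
    + exact: integrable_kernel_pos.
    + exact: integrable_kernel_neg.
  - exact: integrableZl.
  - by move=> w /[!inE] /CK[_ [_ [_]]] /ltW.
by rewrite integralZl// kappa_regular.2// setIC.
Qed.

End integrable_xi.

(* The integral of Y - q over this set of G is nonpositive. *)
Lemma negligible_cond_exp_gt_ratio xi Y q : P.-integrable setT (EFin \o xi) ->
  cond_exp_version P G xi Y ->
  P.-negligible ([set w | (q < Y w)%R] `&` (kernel_ratio_lt xi q `&` A)).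
Proof.
move=> xint [YG [Yint Ye]].
set S := _ `&` _.
have YqG : G [set w | (q < Y w)%R].
  rewrite (_ : [set w | _] = Y @^-1` `]q, +oo[); first exact: YG.
  by apply/seteqP; split => w /=; rewrite in_itv /= andbT.
have GS : G S by apply: GI => //; apply: G_traceH; exact: g_sigma_kernel_ratio_lt.
have mS := G_measurable GS.
have [C HC ngC] := H_traceG YqG.
pose C' := C `&` kernel_ratio_lt xi q.
have HC' : <<s H>> C' by apply: (@measurableI _ X) => //; exact: g_sigma_kernel_ratio_lt.
have mC'A : measurable (C' `&` A).
  exact: measurableI (g_sigma_measurable H_measurable HC') mA.
have ng : P.-negligible ((S `\` (C' `&` A)) `|` ((C' `&` A) `\` S)).
  apply: negligibleS ngC => w [[[Yw [Kw Aw]] nC]|[[[Cw Kw] Aw] nS]].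
  - by left; split => // Cw; apply: nC.
  - by right; split => // Yw; apply: nS.
have intS : \int[P]_(w in S) (Y w)%:E <= q%:E * P S.
  rewrite Ye// (integral_negligible_symdiff mS mC'A xint ng).
  rewrite (measure_negligible_symdiff mS mC'A ng).
  by apply: integral_kernel_ratio_lt => // w [].
apply: (gt0_integral_eq0_negligible (f := fun w => (Y w - q)%:E)) => //.
- apply/measurable_EFinP/measurable_funB => //.
  exact/measurable_funS/measurable_EFinP/(measurable_int _ Yint).
- by move=> w [/= qY _]; rewrite lte_fin subr_gt0.
apply/eqP; rewrite eq_le; apply/andP; split.
  under eq_integral do rewrite EFinB.
  rewrite integralB_EFin//;
    [|exact: integrableS Yint|exact: finite_measure_integrable_cst].
  by rewrite integral_cst// sube_le0.
by apply: integral_ge0 => w [/= qY _]; rewrite lee_fin subr_ge0 ltW.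
Qed.

Lemma negligible_kernel_le0 : P.-negligible (A `&` [set w | kappa w A <= 0]).
Proof.
have mK := measurable_kernel kappa_regular mA.
have HK0 : <<s H>> [set w | kappa w A <= 0].
  have := measurable_lee measurableT mK (@measurable_cst _ _ X _ setT 0).
  by rewrite setTI.
exists (A `&` [set w | kappa w A <= 0]); split => //.
  exact: measurableI (g_sigma_measurable H_measurable HK0).
rewrite -kappa_regular.2// integral0_eq// => w Kw.
by apply/eqP; rewrite eq_le Kw measure_ge0.
Qed.

Lemma kernel_ratio_ltE xi q w : kernel_pos xi w \is a fin_num ->
  kernel_neg xi w \is a fin_num -> 0 < kappa w A ->
  kernel_ratio_lt xi q w <->
  (fine (kernel_pos xi w) - fine (kernel_neg xi w) < q * fine (kappa w A))%R.
Proof.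
move=> pf nf k0; have kf : kappa w A \is a fin_num by exact: fin_num_measure.
rewrite /kernel_ratio_lt /=.
have -> : kernel_pos xi w - kernel_neg xi w < q%:E * kappa w A =
    (fine (kernel_pos xi w) - fine (kernel_neg xi w) < q * fine (kappa w A))%R.
  by rewrite -lte_fin EFinB EFinM !fineK.
split => [[_ [_ []]]//|h]; split; first by rewrite -(fineK pf) ltry.
by split; first by rewrite -(fineK nf) ltry.
Qed.

Theorem cond_exp_on_trace_ratio xi Y : P.-integrable setT (EFin \o xi) ->
  cond_exp_version P G xi Y ->
  {ae P, forall w, (\1_A w)%:E * (Y w)%:E =
     (\1_A w)%:E * ediv0 (\int[kappa w]_x (xi x * \1_A x)%:E)
                         (\int[kappa w]_x (\1_A x)%:E)}.
Proof.
move=> xint Yce.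
have xintN : P.-integrable setT (EFin \o (fun x => - xi x)%R) by exact: integrableN xint.
have YceN := cond_exp_versionN G_measurable xint Yce.
pose gap (r : rat) :=
  ([set w | (ratr r < Y w)%R] `&` (kernel_ratio_lt xi (ratr r) `&` A)) `|`
  ([set w | (- ratr r < - Y w)%R] `&`
     (kernel_ratio_lt (fun x => - xi x)%R (- ratr r) `&` A)).
have ae_gap : {ae P, forall w, ~ (\bigcup_r gap r) w}.
  apply: negligibleS (negligible_bigcup_countable (F := gap) _) => [w /= /contrapT //|r].
  by apply: negligibleU; exact: negligible_cond_exp_gt_ratio.
have ae_kernel_gt0 : {ae P, forall w, ~ (A w /\ kappa w A <= 0)}.
  by apply: negligibleS negligible_kernel_le0 => w /= /contrapT.
have ae_fin : {ae P, forall w,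
    kernel_pos xi w \is a fin_num /\ kernel_neg xi w \is a fin_num}.
  have HT : <<s H>> setT := @measurableT _ X.
  apply: filterS2 (integrable_ae measurableT (integrable_kernel_pos xint HT))
    (integrable_ae measurableT (integrable_kernel_neg xint HT)) => w pf nf.
  by split; [exact: pf|exact: nf].
apply: filterS3 ae_fin ae_kernel_gt0 ae_gap => w [pf nf] k0 ngap.
rewrite indicE; case: (boolP (w \in A)) => [/set_mem Aw|_]; last by rewrite !mul0e.
rewrite !mul1e integral_indic// setIT.
have -> : \int[kappa w]_x (xi x * \1_A x)%:E = kernel_pos xi w - kernel_neg xi w.
  by rewrite integralE.
have kA0 : 0 < kappa w A.
  by rewrite lt_neqAle measure_ge0 andbT; apply/eqP => K0; apply: k0; rewrite -K0.
rewrite /ediv0 gt_eqF// -(fineK pf) -(fineK nf) -EFinB -EFinM; congr EFin.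
apply: eq_ratio_no_rat_between => [|r [rY ratio]|r [Yr ratio]].
- by rewrite -lte_fin fineK// fin_num_measure.
- apply: ngap; exists r => //; left; split => //; split => //.
  exact/kernel_ratio_ltE.
- apply: ngap; exists r => //; right; split; first by rewrite /= ltrN2.
  by split => //; apply/kernel_ratio_ltE; rewrite ?kernel_posN ?kernel_negN.
Qed.

End cond_exp_on_trace.

Lemma measurable_lee_lt d (Omega : measurableType d) (R : realType)
    (f g : Omega -> \bar R) (t : \bar R) :
  measurable_fun setT f -> measurable_fun setT g ->
  measurable [set w | (f w <= t < g w)%E].
Proof.
move=> mf mg.
rewrite (_ : [set w | _] = [set w | (f w <= t)%E] `&` [set w | (t < g w)%E]).
  apply: measurableI.
  - by have := emeasurable_fun_infty_c measurableT mf t; rewrite setTI.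
  - by have := emeasurable_fun_o_infty measurableT mg t; rewrite setTI.
by apply/seteqP; split => w /=; [move/andP|move=> [a b]; apply/andP].
Qed.

Lemma measurable_lt_lee d (Omega : measurableType d) (R : realType)
    (f g : Omega -> \bar R) (t : \bar R) :
  measurable_fun setT f -> measurable_fun setT g ->
  measurable [set w | (f w < t <= g w)%E].
Proof.
move=> mf mg.
rewrite (_ : [set w | _] = [set w | (f w < t)%E] `&` [set w | (t <= g w)%E]).
  apply: measurableI.
  - by have := emeasurable_fun_infty_o measurableT mf t; rewrite setTI.
  - by have := emeasurable_fun_c_infty measurableT mg t; rewrite setTI.
by apply/seteqP; split => w /=; [move/andP|move=> [a b]; apply/andP].
Qed.

Lemma odd_doubleS_half i : odd i -> i = (2 * i./2).+1.
Proof. by move=> oi; rewrite -{1}(odd_double_half i) oi add1n mul2n. Qed.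

Section trace_sigma_algebras.
Context d (Omega : measurableType d) (R : realType) (P : {measure set Omega -> \bar R}).
Variables (F : set (set Omega)) (A : set Omega).

Let X := g_sigma_algebraType F.

Lemma sigma_algebra_trace_g_sigma :
  <<s F>> A -> sigma_algebra setT [set C | <<s F>> (C `&` A)].
Proof.
move=> FA; split.
- by rewrite /= set0I; exact: (@measurable0 _ X).
- move=> C FC; rewrite /= (_ : _ `&` _ = A `\` (C `&` A)).
    exact: (@measurableD _ X) FA FC.
  by apply/seteqP; split => w /=; [move=> [[_ nC] Aw]; split => // -[]|
    move=> [Aw nC]; split => //; split => // Cw; apply: nC].
- move=> G FG; rewrite /= setI_bigcupl.
  by apply: (@bigcupT_measurable _ X) => n; exact: FG.
Qed.

Lemma sigma_algebra_trace_negligible_approx :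
  sigma_algebra setT [set D | exists2 C, <<s F>> C &
    P.-negligible (D `&` A `\` C `|` C `&` A `\` D)].
Proof.
split.
- exists set0; first exact: (@measurable0 _ X).
  by apply: (negligibleS _ (negligible_set0 P)) => w [[[]]|[[]]].
- move=> D [C FC ng]; exists (setT `\` C); first exact: (@measurableD _ X).
  apply: (negligibleS _ ng) => w [[[[_ nD] Aw] nC]|[[[_ nC] Aw] nD]].
    by right; split => //; split => //; apply: contrapT => h; apply: nC; split.
  by left; split => //; split => //; apply: contrapT => h; apply: nD; split.
- move=> G FG.
  have /choice[Cf FCf] : forall n, exists C, <<s F>> C /\
      P.-negligible (G n `&` A `\` C `|` C `&` A `\` G n).
    by move=> n; have [C FC ng] := FG n; exists C.
  exists (\bigcup_n Cf n).
    by apply: (@bigcupT_measurable _ X) => n; exact: (FCf n).1.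
  apply: (negligibleS _ (negligible_bigcup (fun n => (FCf n).2))).
  move=> w [[[[n _ Gw] Aw] nC]|[[[n _ Cw] Aw] nG]].
    exists n => //; left; split; first by split.
    by move=> Cw; apply: nC; exists n.
  exists n => //; right; split; first by split.
  by move=> Gw; apply: nG; exists n.
Qed.

End trace_sigma_algebras.

(* The event [ev i] stands for [T_i <= t < T_(i+1)] (resp. [T_i < t <= T_(i+1)]),
   so that [G_ev] generates G_t v sigma(R_I) (resp. G^-_t v sigma(R_I)) and
   [A_ev] is A^M_t (resp. A^M_(t-)). *)
Section activity_events.
Local Open Scope ereal_scope.
Context d (Omega : measurableType d) (R : realType) (P : probability Omega R)
  dE (E : measurableType dE) (T : nat -> Omega -> \bar R) (Z : nat -> Omega -> E).
Hypothesis mT : forall i, measurable_fun setT (T i).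
Hypothesis mZ : forall i, measurable_fun setT (Z i).
Hypothesis Zpair : forall k, Z (2 * k).+1 = Z (2 * k).+2.
Variables (M I : {fset nat}).
Hypothesis M_odd : forall i, i \in M -> odd i.
Variable ev : nat -> Omega -> Prop.
Hypothesis measurable_ev : forall i, measurable [set w | ev i w].

Definition G_gens_ev := [set S : set Omega | exists k (B : set E), measurable B /\
  S = [set w | ev (2*k).+1 w /\ B (Z (2*k).+2 w)]].
Definition G_ev := G_gens_ev `|` null_sets P `|` RI_gens T Z I.
Definition ZMRI_gens := ZM_gens Z M `|` RI_gens T Z I.
Definition A_ev := [set w | (forall i, i \in M -> ev i w) /\
  (forall i, odd i -> i \notin M -> ~ ev i w)].

Let XG := g_sigma_algebraType G_ev.
Let XH := g_sigma_algebraType ZMRI_gens.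

Lemma RI_gens_measurable S : RI_gens T Z I S -> measurable S.
Proof.
case => [[B mB ->]|[i [iI [B mB ->]]]].
  by have := measurable_Q mT I measurableT mB; rewrite setTI.
by have := mZ i measurableT mB; rewrite setTI.
Qed.

Lemma ZMRI_gens_measurable C : ZMRI_gens C -> measurable C.
Proof.
case => [[i [iM [B mB ->]]]|]; last exact: RI_gens_measurable.
by have := mZ i measurableT mB; rewrite setTI.
Qed.

Lemma G_ev_measurable S : G_ev S -> measurable S.
Proof.
case => [[[k [B [mB ->]]]|[mS _]]|]; [|by []|exact: RI_gens_measurable].
have := mZ (2*k).+2 measurableT mB; rewrite setTI => mZB.
by have -> : [set w | ev (2 * k).+1 w /\ B (Z (2 * k).+2 w)] =
  [set w | ev (2 * k).+1 w] `&` (Z (2*k).+2 @^-1` B); [|exact: measurableI].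
Qed.

Lemma g_sigma_G_ev_A : <<s G_ev>> A_ev.
Proof.
pose F i := if odd i then (if i \in M then [set w | ev i w] else ~` [set w | ev i w])
  else setT.
have -> : A_ev = \bigcap_i F i.
  apply/seteqP; split => w.
    move=> [h1 h2] i _; rewrite /F; case: ifPn => oi //.
    by case: ifPn => iM; [exact: h1|exact: h2].
  move=> h; split.
    by move=> i iM; have := h i Logic.I; rewrite /F M_odd// iM.
  by move=> i oi iM; have := h i Logic.I; rewrite /F oi (negbTE iM).
apply: (@bigcapT_measurable _ XG) => i; rewrite /F.
case: ifPn => oi; last exact: (@measurableT _ XG).
have ev_i : <<s G_ev>> [set w | ev i w].
  rewrite (odd_doubleS_half oi); apply: sub_sigma_algebra; left; left.
  by exists i./2, setT; split => //; apply/seteqP; split => w /= => [h|[]].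
by case: ifPn => _ //; exact: (@measurableC _ XG).
Qed.

Lemma g_sigma_ZMRI_traceG C : <<s ZMRI_gens>> C -> <<s G_ev>> (C `&` A_ev).
Proof.
move=> HC; apply: (smallest_sub (sigma_algebra_trace_g_sigma g_sigma_G_ev_A) _ HC).
move=> S [[i [iM [B mB ->]]]|RS]; last first.
  by apply: (@measurableI _ XG); [apply: sub_sigma_algebra; right|exact: g_sigma_G_ev_A].
have oi := M_odd iM; move: iM; rewrite (odd_doubleS_half oi) => iM.
set k := i./2 in iM *; rewrite /mkset.
rewrite (_ : _ `&` _ = [set w | ev (2*k).+1 w /\ B (Z (2*k).+2 w)] `&` A_ev).
  apply: (@measurableI _ XG); last exact: g_sigma_G_ev_A.
  by apply: sub_sigma_algebra; left; left; exists k, B.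
apply/seteqP; split => w /=.
  by move=> [ZB [h1 h2]]; split => //; split; [exact: h1|rewrite -Zpair].
by move=> [[_ ZB] Aw]; split => //; rewrite Zpair.
Qed.

(* On A_ev the pair (2k+1, 2k+2) is active exactly when 2k+1 is in M, so the
   generator is either the Z_M-event {Z_(2k+1) in B} or empty. *)
Lemma g_sigma_G_traceZMRI D : <<s G_ev>> D -> exists2 C, <<s ZMRI_gens>> C &
  P.-negligible (D `&` A_ev `\` C `|` C `&` A_ev `\` D).
Proof.
move=> HD; apply: (smallest_sub (sigma_algebra_trace_negligible_approx _ _ _) _ HD).
move=> S [[[k [B [mB ->]]]|[mS S0]]|RS].
- case: (boolP ((2*k).+1 \in M)) => kM.
    exists (Z (2*k).+1 @^-1` B).
      by apply: sub_sigma_algebra; left; exists (2*k).+1; split => //; exists B.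
    apply: (negligibleS _ (negligible_set0 P)) => w [[[[_ ZB] Aw] nC]|[[ZB Aw] nS]].
      by apply: nC; rewrite /= Zpair.
    by apply: nS; rewrite /mkset; split; [exact: Aw.1 _ kM|rewrite -Zpair].
  exists set0; first exact: (@measurable0 _ XH).
  apply: (negligibleS _ (negligible_set0 P)) => w [[[[ev_w _] Aw] _]|[[[] _] _]].
  by apply: (Aw.2 _ _ kM ev_w); rewrite /= mul2n odd_double.
- exists set0; first exact: (@measurable0 _ XH).
  apply: (negligibleS _ (ex_intro _ S (And3 mS S0 (@subset_refl _ S)))).
  by move=> w [[[Sw _] _]|[[[] _] _]].
- exists S; first by apply: sub_sigma_algebra; right.
  apply: (negligibleS _ (negligible_set0 P)).
  by move=> w [[[Sw Aw] nS]|[[Sw Aw] nS]]; apply: nS.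
Qed.

Lemma cond_exp_on_A_ev (kappa : Omega -> probability Omega R) (xi Y : Omega -> R) :
  regular_cond_prob P (<<s ZMRI_gens>>) kappa ->
  P.-integrable setT (EFin \o xi) -> cond_exp_version P (<<s G_ev>>) xi Y ->
  {ae P, forall w, (\1_A_ev w)%:E * (Y w)%:E =
     (\1_A_ev w)%:E * ediv0 (\int[kappa w]_x (xi x * \1_A_ev x)%:E)
                            (\int[kappa w]_x (\1_A_ev x)%:E)}.
Proof.
move=> kappa_regular; apply: (cond_exp_on_trace_ratio ZMRI_gens_measurable
  kappa_regular (g_sigma_measurable G_ev_measurable)) => //.
- exact: (@measurableI _ XG).
- exact: g_sigma_G_ev_A.
- exact: g_sigma_ZMRI_traceG.
- exact: g_sigma_G_traceZMRI.
Qed.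

End activity_events.

Unset Implicit Arguments.
Set Strict Implicit.

(* Completeness of P, the ordering and integrability assumptions on the T_i
   and the positivity of the indices in I are not needed for this identity. *)

Theorem mainTheorem2 (d : measure_display) (Omega : measurableType d)
  (R : realType) (P : probability Omega R)
  (dE : measure_display) (E : measurableType dE)
  (T : nat -> Omega -> \bar R) (Z : nat -> Omega -> E)
  (Pcomplete : forall N : set Omega, P.-negligible N -> measurable N)
  (mT : forall i, measurable_fun setT (T i))
  (T_ge0 : forall i w, (0 <= T i w)%E)
  (mZ : forall i, measurable_fun setT (Z i))
  (Zpair : forall k, Z (2 * k).+1 = Z (2 * k).+2)
  (Tpair_le : forall k w, (T (2 * k).+1 w <= T (2 * k).+2 w)%E)
  (Tpair_lt : forall k w, (T (2 * k).+2 w < +oo)%E ->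
                          (T (2 * k).+1 w < T (2 * k).+2 w)%E)
  (count_fin : forall t : R, 0 <= t ->
     (\int[P]_w (\sum_(1 <= i <oo) ((T i w <= t%:E)%E%:R)%:E) < +oo)%E)
  (xi : Omega -> R) (xi_int : P.-integrable setT (EFin \o xi))
  (M I : {fset nat})
  (HM : forall i, i \in M -> odd i)
  (HI : forall i, i \in I -> (0 < i)%N)
  (kappa : Omega -> probability Omega R)
  (Hkappa : regular_cond_prob P (ZMRI T Z M I) kappa) :
  (forall t : R, 0 <= t -> forall Y : Omega -> R,
     cond_exp_version P (GRI P T Z I t) xi Y ->
     {ae P, forall w,
        ((\1_(A_ T M t) w)%:E * (Y w)%:E =
         (\1_(A_ T M t) w)%:E *
         @ediv0 R (\int[kappa w]_x (xi x * \1_(A_ T M t) x)%:E)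
                (\int[kappa w]_x (\1_(A_ T M t) x)%:E))%E}) /\
  (forall t : R, 0 < t -> forall Y : Omega -> R,
     cond_exp_version P (GmRI P T Z I t) xi Y ->
     {ae P, forall w,
        ((\1_(Am_ T M t) w)%:E * (Y w)%:E =
         (\1_(Am_ T M t) w)%:E *
         @ediv0 R (\int[kappa w]_x (xi x * \1_(Am_ T M t) x)%:E)
                (\int[kappa w]_x (\1_(Am_ T M t) x)%:E))%E}).
Proof.
split=> t _ Y.
- have mev i := measurable_lee_lt t%:E (mT i) (mT i.+1).
  exact: (cond_exp_on_A_ev mT mZ Zpair HM mev).
- have mev i := measurable_lt_lee t%:E (mT i) (mT i.+1).
  exact: (cond_exp_on_A_ev mT mZ Zpair HM mev).
Qed.
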